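(* Let $t\ge 3$ be an integer, let $G$ be a graph not containing $K_{3,t}$ as a subgraph, let $D$ be a minimum dominating set of $G$, and let $\nabla$ be an integer with $\nabla>\nabla_1^B(G)$. Define $D_1=\{v\in V(G):$ for all $A\subseteq V(G)\setminus\{v\}$ with $N(v)\subseteq N[A]$ we have $|A|>2\nabla-1\}$, $\hat D=\{v\in V(G):$ for all $A\subseteq D\setminus\{v\}$ with $N(v)\subseteq N[A]$ we have $|A|>2\nabla-1\}$, $R_1=V(G)\setminus N[D_1]$ and $N_{R_1}(v)=N(v)\cap R_1$; for $v\in V(G)$ let $B_v=\{z\in V(G)\setminus\{v\}: |N_{R_1}(v)\cap N_{R_1}(z)|\ge(2\nabla-1)t+1\}$, and let $W=\{v\in V(G): B_v\neq\emptyset\}$. Then for every $v\in W$ and every set $A_v\subseteq V(G)\setminus\{v\}$ with $|A_v|\le 2\nabla-1$ and $N_{R_1}(v)\subseteq N[A_v]$ (such a set exists as $v\notin D_1$), we have $B_v\subseteq A_v$ (hence $|B_v|\le 2\nabla-1$); moreover, if $v\notin\hat D$, then $B_v\subseteq D$.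
   Context: Graphs are finite, undirected and simple. $N(v)$ is the open neighbourhood of $v$, $N[v]=N(v)\cup\{v\}$, $N[A]=\bigcup_{a\in A}N[a]$. A dominating set is a set $D$ with $N[D]=V(G)$. A $1$-shallow minor of $G$ is a graph obtained from $G$ by deleting vertices and edges and contracting pairwise vertex-disjoint connected subgraphs of radius at most $1$; $\nabla_1^B(G)$ is the maximum edge density $|E(H)|/|V(H)|$ of a bipartite $1$-shallow minor $H$ of $G$. $K_{3,t}$ is the complete bipartite graph with parts of sizes $3$ and $t$. *)

(* A finite simple graph is a symmetric irreflexive relation
   e : rel T on a finType T. *)
From mathcomp Require Import all_boot.
Set Implicit Arguments. Unset Strict Implicit. Unset Printing Implicit Defensive.

Section Graphs.
Variables (T : finType) (e : rel T).

Definition nbh (v : T) : {set T} := [set u | e v u].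
Definition cnbh (v : T) : {set T} := v |: nbh v.
Definition cnbhs (A : {set T}) : {set T} := \bigcup_(a in A) cnbh a.

Definition dominating (D : {set T}) : Prop := cnbhs D = [set: T].
Definition min_dominating (D : {set T}) : Prop :=
  dominating D /\ forall D' : {set T}, dominating D' -> #|D| <= #|D'|.

Definition has_K3t (t : nat) : Prop :=
  exists X Y : {set T}, [/\ #|X| = 3, #|Y| = t, [disjoint X & Y] &
    forall x y, x \in X -> y \in Y -> e x y].

(* a branch set of radius at most 1: nonempty with a centre adjacent to all
   other vertices of the set (so it induces a connected subgraph of radius <= 1) *)
Definition radius1_set (X : {set T}) : Prop :=
  exists c, c \in X /\ forall x, x \in X -> x != c -> e c x.

(* A bipartite 1-shallow minor H of G, presented with a bipartition:
   L and R are the branch sets of the two sides (vertices of H), pairwise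
   disjoint, each of radius <= 1; E is the edge set of H, each edge written as
   (left end, right end), and an edge may only join two branch sets between
   which G has an edge. *)
Definition bip_shallow_minor (L R : {set {set T}})
    (E : {set {set T} * {set T}}) : Prop :=
  [/\ forall X, X \in L :|: R -> radius1_set X,
      forall X Y, X \in L :|: R -> Y \in L :|: R -> X != Y -> [disjoint X & Y],
      [disjoint L & R] &
      forall p, p \in E -> [/\ p.1 \in L, p.2 \in R &
                           exists x y, [/\ x \in p.1, y \in p.2 & e x y]]].

(* nabla > nabla_1^B(G): every bipartite 1-shallow minor H has
   |E(H)| / |V(H)| < nabla (H with at least one vertex). *)
Definition nabla_gt_bip1 (nabla : nat) : Prop :=
  forall L R E, bip_shallow_minor L R E -> 0 < #|L :|: R| ->
    #|E| < nabla * #|L :|: R|.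

Definition D1set (nabla : nat) : {set T} :=
  [set v | [forall A : {set T},
     ((A \subset [set~ v]) && (nbh v \subset cnbhs A)) ==> (nabla.*2 - 1 < #|A|)]].

Definition Dhat (D : {set T}) (nabla : nat) : {set T} :=
  [set v | [forall A : {set T},
     ((A \subset D :\ v) && (nbh v \subset cnbhs A)) ==> (nabla.*2 - 1 < #|A|)]].

Definition R1set (nabla : nat) : {set T} := ~: cnbhs (D1set nabla).

Definition nbhR1 (nabla : nat) (v : T) : {set T} := nbh v :&: R1set nabla.

Definition Bset (nabla t : nat) (v : T) : {set T} :=
  [set z | (z != v) &&
     ((nabla.*2 - 1) * t + 1 <= #|nbhR1 nabla v :&: nbhR1 nabla z|)].

Definition Wset (nabla t : nat) : {set T} := [set v | Bset nabla t v != set0].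

End Graphs.

(* If z in B_v were outside A_v, the more than (2 nabla - 1) t common
   R_1-neighbours of v and z would be dominated by the at most 2 nabla - 1
   vertices of A_v, so some a in A_v would dominate more than t of them and
   hence be adjacent to at least t of them; then a, v, z and these t vertices
   form a K_{3,t}.  A set A_v as in the statement exists because N_{R_1}(v) is
   nonempty, so v is not in D_1; for v outside D^ it can be taken inside D. *)
From mathcomp Require Import all_boot.

Set Implicit Arguments.
Unset Strict Implicit.
Unset Printing Implicit Defensive.

Lemma card_le_cover (I T : finType) (A : {set I}) (F : I -> {set T})
    (S : {set T}) t :
  S \subset \bigcup_(a in A) F a -> {in A, forall a, #|S :&: F a| <= t} ->
  #|S| <= #|A| * t.
Proof.
move=> sSF leSF; set P := [set S :&: F a | a in A].
have sSP : S \subset cover P.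
  apply/subsetP => x xS; have /bigcupP [a aA xFa] := subsetP sSF x xS.
  by rewrite cover_imset; apply/bigcupP; exists a; rewrite // inE xS.
apply: leq_trans (subset_leq_card sSP) _.
apply: leq_trans (leq_card_cover P).1 _.
apply: leq_trans (leq_mul (leq_imset_card _ _) (leqnn t)).
rewrite -sum_nat_const; apply: leq_sum => _ /imsetP [a aA ->].
exact: leSF.
Qed.

Section CompleteBipartiteFree.
Variables (T : finType) (e : rel T).
Hypothesis e_irr : irreflexive e.

Lemma has_K3t_common_nbh (a b c : T) t :
  [/\ a != b, b != c & c != a] ->
  t <= #|nbh e a :&: nbh e b :&: nbh e c| -> has_K3t e t.
Proof.
move=> [ab bc ca] /card_geqP [s [s_uniq s_size s_sub]].
have common y : y \in s -> [/\ e a y, e b y & e c y].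
  by move/s_sub; rewrite !inE => /andP [/andP [-> ->] ->].
exists [set a; b; c], [set y in s]; split.
- by rewrite -setUA cardsU1 cards2 !inE negb_or ab bc (eq_sym a c) ca.
- by rewrite cardsE (card_uniqP s_uniq).
- rewrite -setI_eq0; apply/set0Pn => -[x].
  by rewrite !inE => /andP [/orP [/orP [] | ] /eqP -> /common []]; rewrite e_irr.
- by move=> x y; rewrite !inE => /orP [/orP [] | ] /eqP -> /common [].
Qed.

Variable t : nat.
Hypothesis K3t_free : ~ has_K3t e t.

Lemma card_common_nbh_lt (a b c : T) :
  [/\ a != b, b != c & c != a] -> #|nbh e a :&: nbh e b :&: nbh e c| < t.
Proof. by move=> abc; rewrite ltnNge; apply/negP => /(has_K3t_common_nbh abc). Qed.

Lemma card_cnbh_common_nbh_le (S : {set T}) (a v z : T) :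
  [/\ a != v, v != z & z != a] -> S \subset nbh e v :&: nbh e z ->
  #|S :&: cnbh e a| <= t.
Proof.
move=> avz sS.
have sSa : S :&: cnbh e a \subset a |: (nbh e a :&: nbh e v :&: nbh e z).
  apply/subsetP => x; rewrite !inE => /andP [/(subsetP sS)].
  by rewrite !inE => /andP [-> ->] /orP [-> | ->]; rewrite ?orbT.
apply: leq_trans (subset_leq_card sSa) _; rewrite cardsU1.
exact: leq_trans (leq_add (leq_b1 _) (leqnn _)) (card_common_nbh_lt avz).
Qed.

Lemma mem_cover_common_nbh (A S : {set T}) (v z : T) :
  v != z -> v \notin A -> S \subset nbh e v :&: nbh e z ->
  S \subset cnbhs e A -> #|A| * t < #|S| -> z \in A.
Proof.
move=> vz vA sS SA; apply: contraTT => zA; rewrite -leqNgt.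
apply: card_le_cover SA _ => a aA.
apply: card_cnbh_common_nbh_le sS; split=> //.
  by apply: contraNneq vA => <-.
by apply: contraNneq zA => ->.
Qed.

End CompleteBipartiteFree.

Section DominationSets.
Variables (T : finType) (e : rel T) (nabla : nat).

Lemma notin_D1set_cover v : v \notin D1set e nabla ->
  exists A : {set T}, [/\ A \subset [set~ v], nbh e v \subset cnbhs e A &
                         #|A| <= nabla.*2 - 1].
Proof.
rewrite inE negb_forall => /existsP [A].
by rewrite negb_imply -leqNgt => /andP [/andP [sA cA] small]; exists A.
Qed.

Lemma notin_Dhat_cover D v : v \notin Dhat e D nabla ->
  exists A : {set T}, [/\ A \subset D :\ v, nbh e v \subset cnbhs e A &
                         #|A| <= nabla.*2 - 1].
Proof.
rewrite inE negb_forall => /existsP [A].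
by rewrite negb_imply -leqNgt => /andP [/andP [sA cA] small]; exists A.
Qed.

Lemma nbhR1_D1set v : v \in D1set e nabla -> nbhR1 e nabla v = set0.
Proof.
move=> vD1; apply/setP => u; rewrite !inE; apply/negbTE/andP => -[evu /negP].
by apply; apply/bigcupP; exists v; rewrite // !inE evu orbT.
Qed.

Lemma Wset_notin_D1set t v : v \in Wset e nabla t -> v \notin D1set e nabla.
Proof.
rewrite inE => /set0Pn [z]; rewrite inE => /andP [_ large].
apply/negP => /nbhR1_D1set nbhR1_0.
by move: large; rewrite nbhR1_0 set0I cards0 addn1.
Qed.

Lemma Bset_sub_cover t v (Av : {set T}) :
  irreflexive e -> ~ has_K3t e t ->
  Av \subset [set~ v] -> #|Av| <= nabla.*2 - 1 ->
  nbhR1 e nabla v \subset cnbhs e Av -> Bset e nabla t v \subset Av.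
Proof.
move=> e_irr K3t_free sAv small cov; apply/subsetP => z.
rewrite inE => /andP [zv large].
apply: (mem_cover_common_nbh e_irr K3t_free (v := v)
  (S := nbhR1 e nabla v :&: nbhR1 e nabla z)).
- by rewrite eq_sym.
- by apply/negP => /(subsetP sAv); rewrite !inE eqxx.
- by apply/subsetP => x; rewrite !inE => /andP [/andP [-> _] /andP [-> _]].
- exact: subset_trans (subsetIl _ _) cov.
- by apply: leq_trans large; rewrite addn1 ltnS leq_mul2r small orbT.
Qed.

End DominationSets.

Theorem lemma30 (T : finType) (e : rel T) (t nabla : nat) (D : {set T}) :
  symmetric e -> irreflexive e ->
  3 <= t ->
  ~ has_K3t e t ->
  min_dominating e D ->
  nabla_gt_bip1 e nabla ->
  forall v, v \in Wset e nabla t ->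
    [/\ forall Av : {set T}, Av \subset [set~ v] -> #|Av| <= nabla.*2 - 1 ->
          nbhR1 e nabla v \subset cnbhs e Av -> Bset e nabla t v \subset Av,
        #|Bset e nabla t v| <= nabla.*2 - 1 &
        v \notin Dhat e D nabla -> Bset e nabla t v \subset D].
Proof.
move=> _ e_irr _ K3t_free _ _ v vW.
have Bsub (A : {set T}) : A \subset [set~ v] -> #|A| <= nabla.*2 - 1 ->
    nbh e v \subset cnbhs e A -> Bset e nabla t v \subset A.
  by move=> sA small cA; apply: Bset_sub_cover (subset_trans (subsetIl _ _) cA).
split; first by move=> Av; apply: Bset_sub_cover.
- have [A [sA cA small]] := notin_D1set_cover (Wset_notin_D1set vW).
  exact: leq_trans (subset_leq_card (Bsub A sA small cA)) small.
- case/notin_Dhat_cover => A [sA cA small].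
  have sAv : A \subset [set~ v] by apply: subset_trans sA (subsetDr _ _).
  exact: subset_trans (Bsub A sAv small cA) (subset_trans sA (subsetDl _ _)).
Qed.
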